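(* Let $K\subset\mathbb R$ be bounded and $T:K\to K$. If there exists a $T^{\mathbb N}$ interval of positive length, then there exist a subinterval $I\subset K$ of positive length and $n\in\mathbb N$ such that $T^nx=x$ for all $x\in I$.
   Context: An interval is a bounded nonempty connected subset of $\mathbb R$. A subinterval $I\subset K$ is a $T^m$ interval if $T^mx-x$ is constant for $x\in I$ ($T^m$ the $m$-fold composition); it is a $T^{\mathbb N}$ interval if it is a $T^m$ interval for every $m\in\mathbb N$. *)

From Stdlib Require Import Reals.
Open Scope R_scope.

Fixpoint iter (m : nat) (T : R -> R) (x : R) : R :=
  match m with O => x | S k => T (iter k T x) end.

Definition bounded_set (K : R -> Prop) : Prop :=
  exists M, forall x, K x -> Rabs x <= M.

Definition is_interval (I : R -> Prop) : Prop :=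
  bounded_set I /\ (exists x, I x) /\
  (forall x y z, I x -> I z -> x <= y <= z -> I y).

(* An interval has positive length iff it contains two distinct points. *)
Definition pos_length (I : R -> Prop) : Prop :=
  exists a b, I a /\ I b /\ a < b.

Definition subset (I K : R -> Prop) : Prop := forall x, I x -> K x.

Definition Tm_interval (T : R -> R) (m : nat) (I : R -> Prop) : Prop :=
  exists c, forall x, I x -> iter m T x - x = c.

(* N = {1,2,3,...} *)
Definition TN_interval (T : R -> R) (I : R -> Prop) : Prop :=
  forall m, (1 <= m)%nat -> Tm_interval T m I.

From Stdlib Require Import Reals Lra Lia Classical.
Open Scope R_scope.

(* Let J be a T^N interval of positive length and a a point of J.
   On J every iterate acts as a translation: T^m x = x + c_m with the
   "drift" c_m = T^m a - a.  Since the orbits stay in the bounded set K, the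
   drifts are bounded, so by the pigeonhole principle two of them, c_i and
   c_j with i < j, differ by less than the length of J.  Put p = j - i and
   d = c_j - c_i; then some x and x + d both lie in J, and comparing the
   iterates of these two points yields c_(m+p) = c_m + d for all m >= i.
   Hence c_(i+kp) = c_i + k d is a bounded arithmetic progression, so d = 0.
   Finally the translate J + c_i = T^i(J) lies in K, still has positive
   length, and T^p fixes it pointwise. *)

Lemma iter_add (T : R -> R) (p q : nat) (x : R) :
  iter (p + q) T x = iter p T (iter q T x).
Proof. induction p as [|p IH]; simpl; [reflexivity | now rewrite IH]. Qed.

Lemma iter_invariant (K : R -> Prop) (T : R -> R) :
  (forall x, K x -> K (T x)) -> forall m x, K x -> K (iter m T x).
Proof. intros HT m; induction m; intros; simpl; auto. Qed.

Lemma pigeonhole_nat (n : nat) (f : nat -> nat) :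
  (forall k, (k <= n)%nat -> (f k < n)%nat) ->
  exists i j, (i < j <= n)%nat /\ f i = f j.
Proof.
  revert f; induction n as [|n IH]; intros f Hf.
  - specialize (Hf 0%nat (le_n 0)); lia.
  - destruct (classic (exists k, (k <= n)%nat /\ f k = f (S n)))
      as [[k [Hk Hfk]] | Hnew].
    + exists k, (S n); split; [lia | exact Hfk].
    + (* f (S n) is new: rename the value n to f (S n) on 0..n and recurse *)
      set (g k := if Nat.eqb (f k) n then f (S n) else f k).
      destruct (IH g) as [i [j [Hij Hg]]].
      * intros k Hk; unfold g.
        pose proof (Hf k ltac:(lia)); pose proof (Hf (S n) (le_n _)).
        destruct (Nat.eqb_spec (f k) n) as [E|E]; [|lia].
        enough (f (S n) <> n) by lia.
        intro E'; apply Hnew; exists k; split; [lia | congruence].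
      * exists i, j; split; [lia|]; unfold g in Hg.
        destruct (Nat.eqb_spec (f i) n), (Nat.eqb_spec (f j) n); try congruence.
        -- exfalso; apply Hnew; exists j; split; [lia | congruence].
        -- exfalso; apply Hnew; exists i; split; [lia | congruence].
Qed.

Lemma Rabs_le_inv (x y : R) : Rabs x <= y -> - y <= x <= y.
Proof.
  intros H; pose proof (Rle_abs x); pose proof (Rle_abs (- x)).
  rewrite Rabs_Ropp in *; lra.
Qed.

Lemma up_le (y z : R) : y <= z -> (up y <= up z)%Z.
Proof.
  intros H; destruct (archimed y), (archimed z).
  enough (up y < up z + 1)%Z by lia.
  apply lt_IZR; rewrite plus_IZR; lra.
Qed.

Lemma up_eq_close (y z : R) : up y = up z -> Rabs (y - z) < 1.
Proof.
  intros E; destruct (archimed y), (archimed z); rewrite E in *.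
  apply Rabs_def1; lra.
Qed.

Lemma pigeonhole_bounded_seq (u : nat -> R) (B L : R) :
  0 < L -> (forall m, Rabs (u m) <= B) ->
  exists i j, (i < j)%nat /\ Rabs (u j - u i) < L.
Proof.
  intros HL Hu.
  (* the index [up (y m)] of the cell of length L containing u m *)
  set (y m := (u m + B) / L).
  assert (HinvL : 0 <= / L) by (left; apply Rinv_0_lt_compat; exact HL).
  assert (Hy : forall m, 0 <= y m <= 2 * B / L).
  { intro m; destruct (Rabs_le_inv _ _ (Hu m)); unfold y, Rdiv; split.
    - apply Rmult_le_pos; lra.
    - apply Rmult_le_compat_r; lra. }
  assert (Hpos : forall m, (0 < up (y m))%Z).
  { intro m; destruct (archimed (y m)), (Hy m); apply lt_IZR; lra. }
  set (N := Z.to_nat (up (2 * B / L))).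
  destruct (pigeonhole_nat (S N) (fun m => Z.to_nat (up (y m))))
    as [i [j [[Hij _] Hcell]]].
  { intros k _; pose proof (up_le _ _ (proj2 (Hy k))); pose proof (Hpos k).
    unfold N; lia. }
  exists i, j; split; [exact Hij|].
  assert (Hclose : Rabs (y j - y i) < 1).
  { apply up_eq_close; pose proof (Hpos i); pose proof (Hpos j); lia. }
  replace (u j - u i) with (L * (y j - y i)) by (unfold y; field; lra).
  rewrite Rabs_mult, (Rabs_pos_eq L) by lra.
  rewrite <- (Rmult_1_r L) at 2; apply Rmult_lt_compat_l; assumption.
Qed.

Lemma bounded_arith_prog (u0 d B : R) :
  (forall k, Rabs (u0 + INR k * d) <= B) -> d = 0.
Proof.
  intros Hbound; destruct (Req_dec d 0) as [Hd | Hd]; [exact Hd | exfalso].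
  destruct (INR_archimed (Rabs d) (B + Rabs u0)) as [k Hk].
  { apply Rabs_pos_lt; exact Hd. }
  pose proof (Hbound k); pose proof (Rabs_triang (u0 + INR k * d) (- u0)).
  replace (u0 + INR k * d + - u0) with (INR k * d) in * by ring.
  rewrite Rabs_Ropp, Rabs_mult, (Rabs_pos_eq (INR k)) in * by apply pos_INR.
  lra.
Qed.

Definition translate (J : R -> Prop) (c : R) : R -> Prop :=
  fun y => exists x, J x /\ y = x + c.

Lemma translate_interval (J : R -> Prop) (c : R) :
  is_interval J -> is_interval (translate J c).
Proof.
  intros [[M HM] [[x0 Hx0] Hconv]]; split; [|split].
  - exists (M + Rabs c); intros y [x [Hx ->]].
    pose proof (HM x Hx); pose proof (Rabs_triang x c); lra.
  - exists (x0 + c), x0; split; [exact Hx0 | reflexivity].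
  - intros y1 y2 y3 [x1 [Hx1 ->]] [x3 [Hx3 ->]] Hy.
    exists (y2 - c); split; [apply (Hconv x1 _ x3); auto; lra | ring].
Qed.

Lemma translate_pos_length (J : R -> Prop) (c : R) :
  pos_length J -> pos_length (translate J c).
Proof.
  intros [a [b [Ha [Hb Hab]]]].
  exists (a + c), (b + c); repeat split; [exists a | exists b | lra]; auto.
Qed.

Section Drift.

Variables (T : R -> R) (J : R -> Prop) (a : R).
Hypotheses (HTN : TN_interval T J) (Ha : J a).

Definition drift (m : nat) : R := iter m T a - a.

Lemma iter_on_J (m : nat) (x : R) : J x -> iter m T x = x + drift m.
Proof.
  intros Hx; unfold drift; destruct m as [|m]; [simpl; ring|].
  destruct (HTN (S m) ltac:(lia)) as [c Hc].
  pose proof (Hc x Hx); pose proof (Hc a Ha); lra.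
Qed.

(* Orbits of J stay in the bounded invariant set K, so drifts are bounded. *)
Lemma drift_bounded (K : R -> Prop) (M : R) :
  (forall x, K x -> Rabs x <= M) -> (forall x, K x -> K (T x)) -> subset J K ->
  forall m, Rabs (drift m) <= 2 * M.
Proof.
  intros HM HT HJK m; unfold drift.
  assert (HaK : K a) by (apply HJK; exact Ha).
  destruct (Rabs_le_inv _ _ (HM _ HaK)).
  destruct (Rabs_le_inv _ _ (HM _ (iter_invariant K T HT m a HaK))).
  apply Rabs_le; lra.
Qed.

(* If x and x + d lie in J, where d = drift j - drift i, then from time i
   on the drift grows by d every j - i steps: both sides of the equation
   compute the orbit of x at time m + (j - i). *)
Lemma drift_recurrence (i j : nat) (x : R) :
  (i <= j)%nat -> J x -> J (x + (drift j - drift i)) ->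
  forall m, (i <= m)%nat -> drift (m + (j - i)) = drift m + (drift j - drift i).
Proof.
  intros Hij Hx Hxd m Hm.
  assert (E : iter (m + (j - i)) T x = iter m T (x + (drift j - drift i))).
  { replace (m + (j - i))%nat with (m - i + j)%nat by lia.
    replace (iter m T) with (iter (m - i + i) T) by (f_equal; lia).
    rewrite !iter_add, (iter_on_J j x Hx), (iter_on_J i _ Hxd).
    f_equal; ring. }
  rewrite (iter_on_J _ x Hx), (iter_on_J m _ Hxd) in E; lra.
Qed.

Lemma drift_progression (i j : nat) (x : R) :
  (i <= j)%nat -> J x -> J (x + (drift j - drift i)) ->
  forall k, drift (i + k * (j - i)) = drift i + INR k * (drift j - drift i).
Proof.
  intros Hij Hx Hxd k; induction k as [|k IH]; [simpl; rewrite Nat.add_0_r; ring|].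
  replace (i + S k * (j - i))%nat with (i + k * (j - i) + (j - i))%nat by lia.
  rewrite (drift_recurrence i j x Hij Hx Hxd) by lia.
  rewrite IH, S_INR; ring.
Qed.

Lemma drift_close_eq (i j : nat) (b B : R) :
  (forall x y z, J x -> J z -> x <= y <= z -> J y) -> J b ->
  (i <= j)%nat -> (forall m, Rabs (drift m) <= B) ->
  Rabs (drift j - drift i) < b - a -> drift j = drift i.
Proof.
  intros Hconv Hb Hij Hbound Hclose.
  set (d := drift j - drift i) in *.
  destruct (Rabs_def2 _ _ Hclose).
  assert (Hx : exists x, J x /\ J (x + d)).
  { destruct (Rle_lt_dec 0 d).
    - exists a; split; [exact Ha | apply (Hconv a _ b); auto; lra].
    - exists b; split; [exact Hb | apply (Hconv a _ b); auto; lra]. }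
  destruct Hx as [x [Hx Hxd]].
  enough (d = 0) by (unfold d in *; lra).
  apply (bounded_arith_prog (drift i) d B); intro k.
  unfold d; rewrite <- (drift_progression i j x Hij Hx Hxd k); apply Hbound.
Qed.

(* The translate J + drift i is T^i(J): it lies in every invariant set containing J. *)
Lemma translate_drift_subset (K : R -> Prop) (i : nat) :
  (forall x, K x -> K (T x)) -> subset J K -> subset (translate J (drift i)) K.
Proof.
  intros HT HJK y [x [Hx ->]]; rewrite <- (iter_on_J i x Hx).
  apply iter_invariant; auto.
Qed.

(* When drift j = drift i, T^(j-i) maps T^i x to T^j x = T^i x, for x in J. *)
Lemma translate_drift_fixed (i j : nat) :
  (i <= j)%nat -> drift j = drift i ->
  forall y, translate J (drift i) y -> iter (j - i) T y = y.
Proof.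
  intros Hij Hper y [x [Hx ->]].
  rewrite <- (iter_on_J i x Hx), <- iter_add.
  replace (j - i + i)%nat with j by lia.
  rewrite (iter_on_J j x Hx), (iter_on_J i x Hx), Hper; reflexivity.
Qed.

End Drift.

Theorem theorem2p5 (K : R -> Prop) (T : R -> R) :
  bounded_set K ->
  (forall x, K x -> K (T x)) ->
  (exists J, is_interval J /\ subset J K /\ pos_length J /\ TN_interval T J) ->
  exists I (n : nat), is_interval I /\ subset I K /\ pos_length I /\
    (1 <= n)%nat /\ forall x, I x -> iter n T x = x.
Proof.
  intros [M HM] HT [J [HJ [HJK [HJlen HTN]]]].
  destruct HJlen as [a [b [Ha [Hb Hab]]]].
  pose proof (drift_bounded T J a Ha K M HM HT HJK) as Hbound.
  destruct (pigeonhole_bounded_seq (drift T a) (2 * M) (b - a) ltac:(lra) Hbound)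
    as [i [j [Hij Hclose]]].
  assert (Hper : drift T a j = drift T a i).
  { destruct HJ as [_ [_ Hconv]].
    exact (drift_close_eq T J a HTN Ha i j b (2 * M) Hconv Hb ltac:(lia) Hbound Hclose). }
  exists (translate J (drift T a i)), (j - i)%nat.
  split; [| split; [| split; [| split]]].
  - apply translate_interval; exact HJ.
  - apply translate_drift_subset; assumption.
  - apply translate_pos_length; exists a, b; auto.
  - lia.
  - apply (translate_drift_fixed T J a HTN Ha i j); [lia | exact Hper].
Qed.
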